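(* Let $X$ be a bouquet digraph (a single vertex) with $d$ loops, $G$ a finite abelian group, $\alpha:E_X\to G$ a voltage assignment, and suppose $Y=X(G,\alpha)$ is strongly connected. Let $F$ be an algebraically closed field of characteristic zero. Then the base change $\mathcal{A}_F:FV_Y\to FV_Y$ of the adjacency operator of $Y$ is diagonalizable, and in particular $\delta(Y)=0$.
   Context: Digraph $X=(V_X,E_X)$ with incidence $e\mapsto(o(e),t(e))$; strongly connected means a directed path exists between any two distinct vertices. $X(G,\alpha)$ has vertices $V_X\times G$, edges $E_X\times G$, $o(e,\sigma)=(o(e),\sigma)$, $t(e,\sigma)=(t(e),\sigma\alpha(e))$. $\mathcal{A}_Y(w)=\sum_{o(\varepsilon)=w}t(\varepsilon)$ on $\mathbb{Z}V_Y$, $FV_Y=F\otimes\mathbb{Z}V_Y$. $\mathrm{BF}(Y)=\mathrm{coker}(\mathcal{I}-\mathcal{A}_Y)$, $g_Y(u)=\det(\mathcal{I}-\mathcal{A}_Yu)$, $r_Y=\mathrm{ord}_{u=1}g_Y$, $\delta(Y)=r_Y-\mathrm{rank}_{\mathbb{Z}}\mathrm{BF}(Y)$. *)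

From HB Require Import structures.
From mathcomp Require Import all_boot all_order all_algebra all_fingroup.
Set Implicit Arguments. Unset Strict Implicit. Unset Printing Implicit Defensive.
Import Order.TTheory GRing.Theory Num.Theory.
Local Open Scope ring_scope.

(* Bouquet digraph X: one vertex, edge set E_X = 'I_d (d loops).
   Derived digraph Y = X(G, alpha): vertices V_X x G = G (identified with gT),
   edges E_X x G = 'I_d * gT, o(e,s) = s, t(e,s) = s * alpha e. *)

Section Derived.
Variables (gT : finGroupType) (d : nat) (alpha : 'I_d -> gT).

Definition der_edge : rel gT := fun s t => [exists e : 'I_d, s * alpha e == t]%g.

Definition der_strongly_connected : Prop :=
  forall s t : gT, s != t -> connect der_edge s t.

(* Adjacency matrix over R
   with mathcomp's row-vector convention: A i j = #{edges e with o = i, t = j},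
   so that (basis vector of w) *m A = \sum_{o(eps)=w} t(eps), i.e. A_Y. *)
Definition der_adj (R : pzRingType) : 'M[R]_#|gT| :=
  \matrix_(i, j) (#|[set e : 'I_d | (enum_val i * alpha e == enum_val j)%g]|)%:R.

Definition der_g : {poly int} :=
  \det (1%:M - 'X *: map_mx polyC (der_adj int)).

(* r_Y = ord_{u=1} g_Y (computed in Q[u]; g_Y(0) = 1 so g_Y <> 0) *)
Definition der_r : nat := mup 1 (map_poly (intr : int -> rat) der_g).

(* rank_Z BF(Y) = rank_Z coker(I - A_Y) = |V_Y| - rank_Q (I - A_Y) *)
Definition der_rankBF : nat :=
  (#|gT| - \rank (map_mx (intr : int -> rat) (1%:M - der_adj int)))%N.

Definition der_delta : int := (der_r%:Z - der_rankBF%:Z)%R.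

End Derived.

From HB Require Import structures.
From mathcomp Require Import all_boot all_order all_algebra all_fingroup.
From mathcomp Require Import separable cyclotomic algC.
Import Order.TTheory GRing.Theory Num.Theory.
Local Open Scope ring_scope.
Set Implicit Arguments. Unset Strict Implicit. Unset Printing Implicit Defensive.

(* The derived digraph of a bouquet is a Cayley digraph of G: its adjacency
   matrix is the sum, over the loops e, of the permutation matrices of right
   translation by alpha e.  Each of these has finite order m, so over an
   algebraically closed field of characteristic 0 it is diagonalizable (its
   minimal polynomial divides the separable X^m - 1); as G is abelian they
   commute, hence are simultaneously diagonalizable, and so is their sum.
   For A = P^-1 diag(l) P we get det(1 - uA) = prod_i (1 - l_i u), which
   vanishes at u = 1 to order #{i | l_i = 1} = n - rank(1 - A); both sides are
   unchanged by extending scalars from Q to the algebraic numbers, so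
   delta(Y) = 0. *)

Lemma perm_mxX (R : pzRingType) n (s : 'S_n) k :
  perm_mx (s ^+ k)%g = perm_mx s ^+ k :> 'M[R]_n.
Proof.
elim: k => [|k IHk]; first by rewrite expg0 perm_mx1 expr0.
by rewrite expgS perm_mxM IHk exprS mulmxE.
Qed.

Lemma diagonalizable_unity_root (F : closedFieldType) n (A : 'M[F]_n) k :
  [pchar F] =i pred0 -> (0 < k)%N -> A ^+ k = 1 -> diagonalizable A.
Proof.
case: n A => [|n] A charF0 k_gt0 Ak1.
  by rewrite flatmx0; exact: diagonalizable0.
have [r Xk1E] := closed_field_poly_normal ('X^k - 1 : {poly F}).
rewrite (monicP (monic_Xn_sub_1 _ k_gt0)) scale1r in Xk1E.
apply/diagonalizableP; exists r.
  rewrite -separable_prod_XsubC -Xk1E separable_Xn_sub_1 //.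
  by rewrite ((pcharf0P _).1 charF0) -lt0n.
rewrite -Xk1E; apply: mxminpoly_min.
by rewrite rmorphB /= rmorphXn /= horner_mx_X rmorph1 Ak1 subrr.
Qed.

Lemma diagonalizable_sum_comm (F : fieldType) n (As : seq 'M[F]_n) :
  {in As &, forall A B, comm_mx A B} -> {in As, forall A, diagonalizable A} ->
  diagonalizable (\sum_(A <- As) A).
Proof.
move=> commAs diagAs.
have [P Pu /allP diagP] := (codiagonalizableP As).1 (conj commAs diagAs).
exists P => //; rewrite /similar_to /conjmx mulmx_sumr mulmx_suml.
apply/is_diag_mxP => i j ij; rewrite summxE big1_seq // => A /andP[_ AAs].
by have /is_diag_mxP := diagP A AAs; apply.
Qed.

Lemma mup_map_poly (F K : fieldType) (f : {rmorphism F -> K}) x p :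
  p != 0 -> mup (f x) (map_poly f p) = mup x p.
Proof.
move=> p_neq0; have fp_neq0 : map_poly f p != 0 by rewrite map_poly_eq0.
have mapXsubCX k : map_poly f (('X - x%:P) ^+ k) = ('X - (f x)%:P) ^+ k.
  by rewrite rmorphXn rmorphB /= map_polyX map_polyC.
apply/eqP; rewrite eqn_leq; apply/andP; split.
  by rewrite mup_geq // -(dvdp_map f) mapXsubCX -mup_geq.
by rewrite mup_geq // -mapXsubCX (dvdp_map f) -mup_geq.
Qed.

Lemma mup_prod (F : fieldType) (I : Type) (r : seq I) (P : I -> {poly F}) x :
  (forall i, P i != 0) ->
  mup x (\prod_(i <- r) P i) = (\sum_(i <- r) mup x (P i))%N.
Proof.
move=> P_neq0; elim: r => [|i r IHr]; first by rewrite !big_nil mupNroot ?root1.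
rewrite !big_cons mupM ?IHr ?P_neq0 //.
by rewrite prodf_seq_neq0; elim: r {IHr} => //= j r ->; rewrite P_neq0.
Qed.

Lemma mup1_1subXC (F : fieldType) (c : F) :
  mup 1 (1 - 'X * c%:P) = (c == 1 : nat).
Proof.
have [->|c_neq1] := eqVneq c 1; last first.
  by rewrite mupNroot // /root !hornerE subr_eq0 eq_sym.
rewrite mulr1 -opprB -mulN1r mupMr; last by rewrite /root !hornerE oppr_eq0 oner_eq0.
by rewrite -polyC1 -['X - _]expr1 mup_XsubCX eqxx.
Qed.

Definition rev_char_poly (R : comNzRingType) n (A : 'M[R]_n) : {poly R} :=
  \det (1%:M - 'X *: map_mx polyC A).

Lemma map_rev_char_poly (R S : comNzRingType) (f : {rmorphism R -> S}) n
    (A : 'M[R]_n) :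
  map_poly f (rev_char_poly A) = rev_char_poly (map_mx f A).
Proof.
rewrite /rev_char_poly -det_map_mx; congr (\det _); apply/matrixP => i j.
by rewrite !mxE rmorphB rmorphMn rmorph1 rmorphM /= map_polyX map_polyC.
Qed.

Lemma rev_char_poly_neq0 (R : comNzRingType) n (A : 'M[R]_n) :
  rev_char_poly A != 0.
Proof.
apply: contra_neq (oner_neq0 R) => A0.
have := det_map_mx (horner_eval (0 : R)) (1%:M - 'X *: map_mx polyC A).
rewrite -/(rev_char_poly A) A0 rmorph0.
suff -> : map_mx (horner_eval 0) (1%:M - 'X *: map_mx polyC A) = 1%:M.
  by rewrite det1.
apply/matrixP => i j; rewrite !mxE rmorphB rmorph_nat rmorphM /=.
by rewrite horner_evalE hornerX mul0r subr0.
Qed.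

Lemma rev_char_poly_conj (R : comUnitRingType) n (P B : 'M[R]_n) :
  P \in unitmx -> rev_char_poly (invmx P *m B *m P) = rev_char_poly B.
Proof.
move=> P_unit; rewrite /rev_char_poly !map_mxM.
set CP := map_mx polyC P; set CPi := map_mx polyC (invmx P).
have CPiP : CPi *m CP = 1%:M by rewrite -map_mxM mulVmx // map_mx1.
have -> : 1%:M - 'X *: (CPi *m map_mx polyC B *m CP)
          = CPi *m (1%:M - 'X *: map_mx polyC B) *m CP.
  by rewrite mulmxBr mulmxBl mulmx1 CPiP -scalemxAr -scalemxAl.
by rewrite !det_mulmx mulrAC -det_mulmx CPiP det1 mul1r.
Qed.

Lemma rev_char_poly_diag (R : comNzRingType) n (d : 'rV[R]_n) :
  rev_char_poly (diag_mx d) = \prod_i (1 - 'X * (d 0 i)%:P).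
Proof.
rewrite /rev_char_poly.
have -> : 1%:M - 'X *: map_mx polyC (diag_mx d)
          = diag_mx (\row_i (1 - 'X * (d 0 i)%:P)).
  apply/matrixP => i j; rewrite !mxE.
  by case: eqVneq; rewrite ?mulr1n ?mulr0n ?mulr0 ?subr0.
by rewrite det_diag; apply: eq_bigr => i _; rewrite mxE.
Qed.

Lemma rank_diag_mx (F : fieldType) n (d : 'rV[F]_n) :
  \rank (diag_mx d) = (\sum_i (d ord0 i != 0%R))%N.
Proof.
elim: n d => [|n IHn] d; first by rewrite big_ord0 thinmx0 mxrank0.
pose d' : 'rV_(1 + n) := d.
have -> : \rank (diag_mx d) = \rank (diag_mx (row_mx (lsubmx d') (rsubmx d'))).
  by rewrite hsubmxK.
rewrite diag_mx_row rank_diag_block_mx IHn rank_rV big_ord_recl.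
congr (_ + _)%N.
  rewrite [diag_mx _]mx11_scalar -scalemx1 scalemx_eq0.
  rewrite (negPf (matrix_nonzero1 _ 0)) orbF !mxE /= mulr1n.
  by congr (d _ _ != 0); apply: val_inj.
by apply: eq_bigr => i _; rewrite mxE; congr (d _ _ != 0); apply: val_inj.
Qed.

Lemma mxrank_conj (F : fieldType) n (P B : 'M[F]_n) :
  P \in unitmx -> \rank (invmx P *m B *m P) = \rank B.
Proof.
move=> P_unit; rewrite mxrankMfree ?row_free_unit //.
by rewrite eqmxMfull // row_full_unit unitmx_inv.
Qed.

Lemma mup1_rev_char_poly (F : fieldType) n (A : 'M[F]_n) :
  diagonalizable A -> mup 1 (rev_char_poly A) = (n - \rank (1%:M - A)%R)%N.
Proof.
case=> P P_unit /(diagonalizable_forLR P_unit)[d ->]; rewrite mxpoly.conjVmx //.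
have -> : 1%:M - invmx P *m diag_mx d *m P
          = invmx P *m diag_mx (\row_i (1 - d 0 i)) *m P.
  have -> : diag_mx (\row_i (1 - d 0 i)) = 1%:M - diag_mx d.
    apply/matrixP => i j; rewrite !mxE.
    by case: eqVneq; rewrite ?mulr1n ?mulr0n ?subr0.
  by rewrite mulmxBr mulmxBl mulmx1 mulVmx.
have factor_neq0 i : 1 - 'X * (d 0 i)%:P != 0 :> {poly F}.
  apply: contraTneq isT => /(congr1 (horner^~ 0)); rewrite !hornerE => /eqP.
  by rewrite subr0 oner_eq0.
rewrite rev_char_poly_conj // rev_char_poly_diag mup_prod //.
rewrite mxrank_conj // rank_diag_mx.
have count_split : (\sum_i (d ord0 i == 1%R) + \sum_i (d ord0 i != 1%R))%N = n.
  rewrite -big_split /= (eq_bigr (fun _ => 1%N)) ?sum1_card ?card_ord //.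
  by move=> i _; case: (d ord0 i == 1).
apply: (canRL (addnK _)); rewrite -[RHS]count_split; congr (_ + _).
  by apply: eq_bigr => i _; rewrite mup1_1subXC.
by apply: eq_bigr => i _; rewrite mxE subr_eq0 eq_sym.
Qed.

Section TranslationPerm.
Variable gT : finGroupType.

Definition transl_fun (g : gT) (i : 'I_#|gT|) : 'I_#|gT| :=
  enum_rank (enum_val i * g)%g.

Lemma transl_fun_inj g : injective (transl_fun g).
Proof. by move=> i j /enum_rank_inj /mulIg /enum_val_inj. Qed.

Definition transl_perm g : 'S_#|gT| := perm (@transl_fun_inj g).

Lemma transl_permE g i : transl_perm g i = enum_rank (enum_val i * g)%g.
Proof. by rewrite permE. Qed.

Lemma transl_permM g h : transl_perm (g * h) = (transl_perm g * transl_perm h)%g.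
Proof. by apply/permP => i; rewrite permM !transl_permE enum_rankK mulgA. Qed.

End TranslationPerm.

Section DerivedBouquet.
Variables (gT : finGroupType) (d : nat) (alpha : 'I_d -> gT).

Lemma der_adjE (R : pzRingType) :
  der_adj alpha R = \sum_(e < d) perm_mx (transl_perm (alpha e)).
Proof.
apply/matrixP => i j; rewrite !mxE summxE -sum1_card natr_sum big_mkcond /=.
apply: eq_bigr => e _; rewrite !mxE inE transl_permE.
by rewrite -(can_eq enum_valK) enum_rankK; case: eqP.
Qed.

Lemma map_der_adj (R S : pzRingType) (f : {rmorphism R -> S}) :
  map_mx f (der_adj alpha R) = der_adj alpha S.
Proof. by apply/matrixP => i j; rewrite !mxE rmorph_nat. Qed.

Lemma diagonalizable_der_adj (F : closedFieldType) :
  [pchar F] =i pred0 -> abelian [set: gT] -> diagonalizable (der_adj alpha F).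
Proof.
move=> charF0 gT_abelian; rewrite der_adjE -big_enum -(big_map _ predT id) /=.
apply: diagonalizable_sum_comm => [_ _ /mapP[e _ ->] /mapP[e' _ ->]|_ /mapP[e _ ->]].
  have commG (x y : gT) : (x * y = y * x)%g.
    by apply: (centsP gT_abelian); rewrite inE.
  by rewrite /comm_mx -!perm_mxM -!transl_permM commG.
apply: (diagonalizable_unity_root charF0 (order_gt0 (transl_perm (alpha e)))).
by rewrite -perm_mxX expg_order perm_mx1.
Qed.

Lemma der_gE : der_g alpha = rev_char_poly (der_adj alpha int).
Proof. by []. Qed.

Lemma der_delta_eq0 : diagonalizable (der_adj alpha algC) -> der_delta alpha = 0.
Proof.
move=> diagA; pose ratC : {rmorphism rat -> algC} := ratr.
have adj_rat : map_mx intr (der_adj alpha int) = der_adj alpha rat.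
  exact: map_der_adj.
have adj_algC : map_mx ratC (der_adj alpha rat) = der_adj alpha algC.
  exact: map_der_adj.
rewrite /der_delta /der_r /der_rankBF der_gE map_rev_char_poly adj_rat.
rewrite -(mup_map_poly ratC) ?rev_char_poly_neq0 // rmorph1.
rewrite map_rev_char_poly adj_algC.
rewrite map_mxB map_mx1 adj_rat -(mxrank_map ratC) map_mxB map_mx1 adj_algC.
by rewrite mup1_rev_char_poly // subrr.
Qed.

End DerivedBouquet.

Unset Implicit Arguments.

Theorem proposition4p7 (gT : finGroupType) (d : nat) (alpha : 'I_d -> gT)
  (F : closedFieldType) :
  abelian [set: gT] ->
  der_strongly_connected alpha ->
  [pchar F] =i pred0 ->
  diagonalizable (der_adj alpha F) /\ der_delta alpha = 0.
Proof.
move=> gT_abelian _ charF0; split; first exact: diagonalizable_der_adj.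
exact/der_delta_eq0/diagonalizable_der_adj/gT_abelian/Cpchar.
Qed.
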